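(* Fix an integer $b>1$. For each positive integer $m$, let $k_m=r+1$, where $r\ge 0$ is the exponent with $b^r\mid m$ and $b^{r+1}\nmid m$. Then, as formal power series in $q$, $$\sum_{n=0}^\infty p(n)q^n \equiv \prod_{m=1}^\infty \left(1+q^m+q^{2m}+\cdots+q^{(b-1)m}\right)^{k_m} \pmod{b},$$ where the congruence means that the coefficients of $q^n$ agree modulo $b$ for every $n$. Equivalently, the number of partitions of $n$ is congruent modulo $b$ to the number of partitions of $n$ in which, for each $m$, parts of size $m$ come in $k_m$ distinct types and each type of part of size $m$ appears at most $b-1$ times.
   Context: $p(n)$ denotes the number of partitions of $n$, with $p(0)=1$. *)

From mathcomp Require Import all_boot all_order all_algebra.
Set Implicit Arguments. Unset Strict Implicit. Unset Printing Implicit Defensive.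
Import GRing.Theory Num.Theory.

(* A partition of n is encoded by its multiplicity function:
   f i = number of parts equal to i (0 <= i <= n), with no parts of size 0
   and \sum_i i * f i = n.  Multiplicities are at most n, so 'I_n.+1 suffices.
   partition_count n = p(n); in particular partition_count 0 = 1. *)
Definition partition_count (n : nat) : nat :=
  #|[set f : {ffun 'I_n.+1 -> 'I_n.+1} |
       (val (f ord0) == 0%N) && (\sum_(i < n.+1) (i * f i)%N == n)]|.

(* Since (1 - q^m)(1 + q^m + ... + q^((b-1)m)) = 1 - q^(bm) and k_m counts the
   i >= 0 with b^i | m, the product of the theorem times Euler's product
   prod_m (1 - q^m) telescopes: grouping the factors by i, the i-th group turns
   prod_j (1 - q^(j b^i)) into prod_j (1 - q^(j b^(i+1))), and once b^i exceeds n
   nothing is left modulo q^(n+1).  The partition generating function is also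
   inverse to Euler's product, so the two series agree coefficientwise over the
   integers, which is stronger than the congruence modulo b.  All computations
   are done with finite products modulo q^(n+1). *)

From mathcomp Require Import all_boot all_order all_algebra.
From mathcomp Require Import ring zify.
Set Implicit Arguments. Unset Strict Implicit. Unset Printing Implicit Defensive.
Import GRing.Theory Num.Theory.
Local Open Scope ring_scope.

Section TruncatedPowerSeries.
Variable R : comNzRingType.
Implicit Types p q u : {poly R}.

Definition eqmodX (n : nat) p q := exists r, p = q + 'X^n * r.

Lemma eqmodX_refl n p : eqmodX n p p.
Proof. by exists 0; rewrite mulr0 addr0. Qed.

Lemma eqmodX_sym n p q : eqmodX n p q -> eqmodX n q p.
Proof. by move=> [r ->]; exists (- r); ring. Qed.

Lemma eqmodX_trans n p q u : eqmodX n p q -> eqmodX n q u -> eqmodX n p u.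
Proof. by move=> [r ->] [s ->]; exists (s + r); ring. Qed.

Lemma eqmodXM n p q p' q' :
  eqmodX n p q -> eqmodX n p' q' -> eqmodX n (p * p') (q * q').
Proof. by move=> [r ->] [s ->]; exists (r * q' + q * s + 'X^n * r * s); ring. Qed.

Lemma eqmodX_coef n p q i : eqmodX n p q -> (i < n)%N -> p`_i = q`_i.
Proof. by move=> [r ->] lt_in; rewrite coefD coefXnM lt_in addr0. Qed.

Lemma eqmodX_prod n (I : Type) (s : seq I) (P : pred I) (F G : I -> {poly R}) :
  (forall i, P i -> eqmodX n (F i) (G i)) ->
  eqmodX n (\prod_(i <- s | P i) F i) (\prod_(i <- s | P i) G i).
Proof.
move=> eqFG; apply: (big_ind2 (eqmodX n)) => //; first exact: eqmodX_refl.
by move=> ????; apply: eqmodXM.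
Qed.

Lemma eqmodX_prod1 n (I : Type) (s : seq I) (P : pred I) (F : I -> {poly R}) :
  (forall i, P i -> eqmodX n (F i) 1) -> eqmodX n (\prod_(i <- s | P i) F i) 1.
Proof. by move=> /(eqmodX_prod s); rewrite big1_eq. Qed.

Lemma eqmodX_prod_nat_trunc n a c N (F : nat -> {poly R}) : (a <= c <= N)%N ->
  (forall m, (c <= m < N)%N -> eqmodX n (F m) 1) ->
  eqmodX n (\prod_(a <= m < N) F m) (\prod_(a <= m < c) F m).
Proof.
move=> /andP[le_ac le_cN] tail1; rewrite (big_cat_nat le_ac le_cN) /=.
rewrite -[X in eqmodX _ _ X]mulr1; apply: eqmodXM; first exact: eqmodX_refl.
by rewrite big_nat_cond; apply: eqmodX_prod1 => m /andP[/tail1].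
Qed.

Lemma eqmodX_1DXnM n m p : (n <= m)%N -> eqmodX n (1 + 'X^m * p) 1.
Proof. by move=> le_nm; exists ('X^(m - n) * p); rewrite mulrA -exprD subnKC. Qed.

Lemma eqmodX_1BXn n m : (n <= m)%N -> eqmodX n (1 - 'X^m) 1.
Proof. by move=> /(eqmodX_1DXnM (-1)); rewrite mulrN1. Qed.

Lemma eqmodX_inv_uniq n u p q :
  eqmodX n (u * p) 1 -> eqmodX n (u * q) 1 -> eqmodX n p q.
Proof.
move=> up1 uq1; apply: (@eqmodX_trans _ _ (p * (u * q))).
  by rewrite -{1}[p]mulr1; apply/eqmodXM/eqmodX_sym => //; apply: eqmodX_refl.
rewrite mulrA (mulrC p) -[X in eqmodX _ _ X]mul1r.
by apply: eqmodXM => //; apply: eqmodX_refl.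
Qed.
End TruncatedPowerSeries.

Lemma big_nat_dvdn (R : Type) (idx : R) (op : Monoid.law idx) (c K : nat)
    (F : nat -> R) : (0 < c)%N ->
  \big[op/idx]_(1 <= m < (K * c).+1 | (c %| m)%N) F m
    = \big[op/idx]_(1 <= j < K.+1) F (j * c).
Proof.
move=> c_gt0; elim: K => [|K IHK]; first by rewrite !big_geq.
have le_Kc : (K * c < K.+1 * c)%N by rewrite ltn_mul2r c_gt0 /=.
rewrite (@big_cat_nat _ _ _ (K * c).+1) //= ?ltnS 1?ltnW // IHK [RHS]big_nat_recr //=.
congr (op _ _); rewrite big_mkcond big_nat_recr //= dvdn_mull //.
rewrite big_nat_cond big1 ?Monoid.mul1m // => m /andP[/andP[lo hi] _].
case: ifP => // /dvdnP[q def_m]; exfalso; move: lo hi.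
by rewrite def_m !ltn_mul2r c_gt0 /=; lia.
Qed.

Section GeometricFactors.
Variable R : comNzRingType.

Definition geom (b m : nat) : {poly R} := \sum_(j < b) 'X^(j * m).

Lemma mul_1BXn_geom b m : (1 - 'X^m) * geom b m = 1 - 'X^(b * m).
Proof.
have -> : geom b m = \sum_(j < b) ('X^m) ^+ j.
  by apply: eq_bigr => j _; rewrite mulnC exprM.
by rewrite mulnC exprM -[RHS]opprB subrX1 -mulNr opprB.
Qed.

Lemma eqmodX_geom n b m : (0 < b)%N -> (n <= m)%N -> eqmodX n (geom b m) 1.
Proof.
case: b => // b _ le_nm; rewrite /geom big_ord_recl mul0n expr0.
under eq_bigr do rewrite mulSn exprD.
by rewrite -mulr_sumr; apply: eqmodX_1DXnM.
Qed.

Definition euler (N : nat) : {poly R} := \prod_(1 <= m < N.+1) (1 - 'X^m).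

End GeometricFactors.

Section PartitionSide.
Variable R : comNzRingType.

Definition partition_gf (n : nat) : {poly R} := \prod_(1 <= m < n.+1) geom R n.+1 m.

Lemma coef_partition_gf n : (partition_gf n)`_n = (partition_count n)%:R.
Proof.
(* [F i j] accounts for j parts of size i; size 0 admits only j = 0, so the
   expansion below runs over exactly the multiplicity functions counted by
   [partition_count n]. *)
pose F (i j : 'I_n.+1) : {poly R} :=
  if (i == 0 :> nat) && (j != 0 :> nat) then 0 else 'X^(i * j).
have -> : partition_gf n = \prod_(i < n.+1) \sum_(j < n.+1) F i j.
  have F0 : \sum_(j < n.+1) F ord0 j = 1.
    rewrite big_ord_recl big1 => [|j _]; last by rewrite /F.
    by rewrite /F /= mul0n expr0 addr0.
  rewrite /partition_gf [RHS]big_ord_recl F0 mul1r big_add1 /= big_mkord.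
  by apply: eq_bigr => i _; apply: eq_bigr => j _; rewrite /F /= mulnC.
rewrite bigA_distr_bigA coef_sum /partition_count cardsE -sum1_card natr_sum.
rewrite [RHS]big_mkcond /=.
apply: eq_bigr => f _; rewrite unfold_in /=.
have [f0|f0] /= := eqVneq (val (f ord0)) 0%N; last first.
  by rewrite (bigD1 ord0) //= {1}/F /= f0 mul0r coef0.
rewrite (eq_bigr (fun i : 'I_n.+1 => 'X^(i * f i))); last first.
  move=> i _; rewrite /F; case: eqP => //= i0.
  have -> : i = ord0 by apply: val_inj.
  by rewrite f0.
by rewrite (prodrXr 'X) coefXn eq_sym; case: eqP.
Qed.

Lemma euler_mul_partition_gf n N : (n <= N)%N ->
  eqmodX n.+1 (euler R N * partition_gf n) 1.
Proof.
move=> le_nN; apply: (@eqmodX_trans _ _ _ (euler R n * partition_gf n)).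
  apply: eqmodXM; last exact: eqmodX_refl.
  apply: eqmodX_prod_nat_trunc => [|m /andP[le_nm _]]; last exact: eqmodX_1BXn.
  by rewrite ltnS.
rewrite /euler /partition_gf -big_split big_nat_cond /=.
apply: eqmodX_prod1 => m /andP[/andP[m_gt0 _] _].
by rewrite mul_1BXn_geom; apply: eqmodX_1BXn; rewrite leq_pmulr.
Qed.
End PartitionSide.

Section Telescoping.
Variables (R : comNzRingType) (b : nat) (k : nat -> nat).
Hypothesis b_gt1 : (1 < b)%N.
Hypothesis k_val : forall m : nat, (0 < m)%N ->
  exists r : nat, k m = r.+1 /\ (b ^ r %| m)%N /\ ~~ (b ^ r.+1 %| m)%N.

Lemma k_count M N : (0 < M <= N)%N -> k M = (\sum_(i < N) (b ^ i %| M))%N.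
Proof.
move=> /andP[M_gt0 le_MN]; have [r [-> [dvd_r ndvd_r]]] := k_val M_gt0.
have dvd_iff i : (b ^ i %| M)%N = (i <= r)%N.
  apply/idP/idP => [dvd_i | le_ir]; last by rewrite (dvdn_trans _ dvd_r) ?dvdn_exp2l.
  by rewrite leqNgt; apply: contra ndvd_r => lt_ri; rewrite (dvdn_trans _ dvd_i) ?dvdn_exp2l.
have lt_rN : (r < N)%N.
  exact: leq_trans (ltn_expl r b_gt1) (leq_trans (dvdn_leq M_gt0 dvd_r) le_MN).
under eq_bigr do rewrite dvd_iff.
rewrite -(subnKC lt_rN) big_split_ord /= [X in (_ + X)%N]big1 => [|i _].
  rewrite addn0 (eq_bigr (fun=> 1%N)) => [|i _]; last by rewrite -ltnS ltn_ord.
  by rewrite sum1_card card_ord.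
by rewrite leqNgt ltnS leq_addr.
Qed.

Definition geom_prod_k (N : nat) : {poly R} :=
  \prod_(1 <= m < N.+1) geom R b m ^+ k m.

Definition layer (N i : nat) : {poly R} := \prod_(1 <= j < N.+1) geom R b (j * b ^ i).

Definition euler_dil (N L : nat) : {poly R} := \prod_(1 <= j < N.+1) (1 - 'X^(j * b ^ L)).

Lemma geom_prod_k_layers N :
  geom_prod_k N = \prod_(i < N) \prod_(1 <= m < N.+1 | (b ^ i %| m)%N) geom R b m.
Proof.
under [RHS]eq_bigr do rewrite big_mkcond.
rewrite [RHS]exchange_big /geom_prod_k /= big_nat_cond [RHS]big_nat_cond.
apply: eq_bigr => m /andP[range_m _]; rewrite (k_count range_m) -prodrXr.
by apply: eq_bigr => i _; case: (b ^ i %| m)%N.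
Qed.

Lemma eqmodX_layer n N i : (n <= N)%N ->
  eqmodX n.+1 (\prod_(1 <= m < N.+1 | (b ^ i %| m)%N) geom R b m) (layer N i).
Proof.
move=> le_nN; have bi_gt0 : (0 < b ^ i)%N by rewrite expn_gt0 ltnW.
rewrite /layer -big_nat_dvdn //; apply: eqmodX_sym.
rewrite big_mkcond [X in eqmodX _ _ X]big_mkcond /=.
apply: eqmodX_prod_nat_trunc => [|m /andP[lt_Nm _]].
  by rewrite /= ltnS leq_pmulr.
case: ifP => _; last exact: eqmodX_refl.
exact: eqmodX_geom (ltnW b_gt1) (leq_ltn_trans le_nN lt_Nm).
Qed.

Lemma euler_dil_mul_layer N L : euler_dil N L * layer N L = euler_dil N L.+1.
Proof.
rewrite /euler_dil /layer -big_split; apply: eq_bigr => j _.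
by rewrite /= mul_1BXn_geom expnS mulnCA.
Qed.

Lemma euler_mul_layers N L : euler R N * \prod_(i < L) layer N i = euler_dil N L.
Proof.
elim: L => [|L IHL]; last by rewrite big_ord_recr mulrA IHL euler_dil_mul_layer.
by rewrite big_ord0 mulr1; apply: eq_bigr => j _; rewrite expn0 muln1.
Qed.

Lemma eqmodX_euler_dil n N : (n <= N)%N -> eqmodX n.+1 (euler_dil N N) 1.
Proof.
move=> le_nN; rewrite /euler_dil big_nat_cond.
apply: eqmodX_prod1 => j /andP[/andP[j_gt0 _] _]; apply: eqmodX_1BXn.
rewrite (leq_trans _ (leq_pmull _ j_gt0)) // (leq_ltn_trans le_nN) //.
exact: ltn_expl N b_gt1.
Qed.

Lemma euler_mul_geom_prod_k n N : (n <= N)%N ->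
  eqmodX n.+1 (euler R N * geom_prod_k N) 1.
Proof.
move=> le_nN; apply: (@eqmodX_trans _ _ _ (euler R N * \prod_(i < N) layer N i)).
  apply: eqmodXM; first exact: eqmodX_refl.
  by rewrite geom_prod_k_layers; apply: eqmodX_prod => i _; apply: eqmodX_layer.
by rewrite euler_mul_layers; apply: eqmodX_euler_dil.
Qed.
End Telescoping.

Theorem theorem3 (b : nat) (k : nat -> nat) :
  (1 < b)%N ->
  (forall m : nat, (0 < m)%N ->
     exists r : nat, k m = r.+1 /\ (b ^ r %| m)%N /\ ~~ (b ^ r.+1 %| m)%N) ->
  forall N n : nat, (n <= N)%N ->
    ((partition_count n)%:Z =
       (\prod_(1 <= m < N.+1) (\sum_(j < b) 'X^(j * m)) ^+ k m : {poly int})`_n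
     %[mod (b%:Z)])%Z.
Proof.
move=> b_gt1 k_val N n le_nN.
have gf_eq : eqmodX n.+1 (partition_gf int n) (geom_prod_k int b k N).
  apply: (eqmodX_inv_uniq (euler_mul_partition_gf int le_nN)).
  exact: euler_mul_geom_prod_k.
by rewrite -natz -coef_partition_gf (eqmodX_coef gf_eq).
Qed.
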